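(* Let $(F,\phi):\mathcal A\to\mathcal B$, $(K,\kappa):\mathcal A\to\mathcal D$, $(G,\gamma):\mathcal B\to\mathcal C$, $(H,\eta):\mathcal D\to\mathcal C$ be morphisms of bigroupoids with $(G,\gamma)\circ(F,\phi)=(H,\eta)\circ(K,\kappa)$, where $K$ is a trivial cofibration which is surjective on 0-cells and $G$ is a fibration. Then there is a morphism $(L,\lambda):\mathcal D\to\mathcal B$ with $(L,\lambda)\circ(K,\kappa)=(F,\phi)$ and $(G,\gamma)\circ(L,\lambda)=(H,\eta)$.
   Context: A bigroupoid $\mathcal B$ consists of: a set $\mathcal B_0$ of 0-cells; for each $A,B\in\mathcal B_0$ a groupoid $\mathcal B(A,B)$ whose objects are 1-cells and whose arrows are 2-cells; composition functors $*$; identity 1-cells $1_A$; inversion functors $(-)^*$; and natural isomorphisms $\mathbf a:(h*g)*f\Rightarrow h*(g*f)$, $\mathbf l:1_B*f\Rightarrow f$, $\mathbf r:f*1_A\Rightarrow f$, $\mathbf e:f^**f\Rightarrow 1_A$, $\mathbf i:1_B\Rightarrow f*f^*$, such that the pentagon for $\mathbf a$ commutes, $(\mathrm{id}*\mathbf l)\circ\mathbf a=\mathbf r*\mathrm{id}$, and $\mathbf r_f\circ(\mathrm{id}*\mathbf e_f)\circ\mathbf a\circ(\mathbf i_f*\mathrm{id})=\mathbf l_f$. A morphism $(F,\phi):\mathcal A\to\mathcal B$ consists of a function on 0-cells, functors $F_{A,A'}:\mathcal A(A,A')\to\mathcal B(FA,FA')$ and natural isomorphisms $\phi_{g,f}:Fg*Ff\Rightarrow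 F(g*f)$, $\phi_A:1_{FA}\Rightarrow F1_A$, $\phi_f:(Ff)^*\Rightarrow F(f^* )$ satisfying $F\mathbf a\circ\phi\circ(\phi*\mathrm{id})=\phi\circ(\mathrm{id}*\phi)\circ\mathbf a$, $F\mathbf r\circ\phi\circ(\mathrm{id}*\phi_A)=\mathbf r$, $F\mathbf l\circ\phi\circ(\phi_B*\mathrm{id})=\mathbf l$, $F\mathbf e\circ\phi\circ(\phi_f*\mathrm{id})=\phi_A\circ\mathbf e$, $F\mathbf i\circ\phi_B=\phi\circ(\mathrm{id}*\phi_f)\circ\mathbf i$; composition is $(G,\gamma)\circ(F,\phi)=(GF,G\phi\circ\gamma F)$. Fibration: (1) for every 0-cell $A'$ of $\mathcal A$ and 1-cell $b:B\to FA'$ there is $a:A\to A'$ with $FA=B$, $Fa=b$; (2) for every 1-cell $a'$ and 2-cell $\beta:b\Rightarrow Fa'$ there is $\alpha:a\Rightarrow a'$ with $Fa=b$, $F\alpha=\beta$. Cofibration: injective on 0-cells and each $F_{A,A'}$ injective on objects. Weak equivalence: every 0-cell $B$ of the codomain admits a 1-cell $B\to FA'$ for some 0-cell $A'$, and each $F_{A,A'}$ is an equivalence of categories. A trivial cofibration is a cofibration that is a weak equivalence. *)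

Set Implicit Arguments.
Unset Strict Implicit.

Record BgData := {
  obj : Type;
  hom : obj -> obj -> Type;
  cell : forall A B : obj, hom A B -> hom A B -> Type;
  vcomp : forall (A B : obj) (f g h : hom A B),
            cell g h -> cell f g -> cell f h;
  id2 : forall (A B : obj) (f : hom A B), cell f f;
  inv2 : forall (A B : obj) (f g : hom A B), cell f g -> cell g f;
  comp1 : forall A B C : obj, hom B C -> hom A B -> hom A C;
  comp2 : forall (A B C : obj) (g g' : hom B C) (f f' : hom A B),
            cell g g' -> cell f f' -> cell (comp1 g f) (comp1 g' f');
  id1 : forall A : obj, hom A A;
  rev1 : forall A B : obj, hom A B -> hom B A;
  rev2 : forall (A B : obj) (f f' : hom A B),
            cell f f' -> cell (rev1 f) (rev1 f');
  assoc : forall (A B C D : obj) (h : hom C D) (g : hom B C) (f : hom A B),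
            cell (comp1 (comp1 h g) f) (comp1 h (comp1 g f));
  lu : forall (A B : obj) (f : hom A B), cell (comp1 (id1 B) f) f;
  ru : forall (A B : obj) (f : hom A B), cell (comp1 f (id1 A)) f;
  ev : forall (A B : obj) (f : hom A B), cell (comp1 (rev1 f) f) (id1 A);
  coev : forall (A B : obj) (f : hom A B), cell (id1 B) (comp1 f (rev1 f))
}.

Arguments hom {b} _ _.
Arguments cell {b A B} _ _.
Arguments vcomp {b A B f g h} _ _.
Arguments id2 {b A B} _.
Arguments inv2 {b A B f g} _.
Arguments comp1 {b A B C} _ _.
Arguments comp2 {b A B C g g' f f'} _ _.
Arguments id1 {b} _.
Arguments rev1 {b A B} _.
Arguments rev2 {b A B f f'} _.
Arguments assoc {b A B C D} _ _ _.
Arguments lu {b A B} _.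
Arguments ru {b A B} _.
Arguments ev {b A B} _.
Arguments coev {b A B} _.

Record BgAxioms (B : BgData) : Prop := {
  ax_vassoc : forall (X Y : obj B) (f g h k : hom X Y)
      (a : cell f g) (b : cell g h) (c : cell h k),
      vcomp c (vcomp b a) = vcomp (vcomp c b) a;
  ax_vid_l : forall (X Y : obj B) (f g : hom X Y) (a : cell f g), vcomp (id2 g) a = a;
  ax_vid_r : forall (X Y : obj B) (f g : hom X Y) (a : cell f g), vcomp a (id2 f) = a;
  ax_inv_l : forall (X Y : obj B) (f g : hom X Y) (a : cell f g), vcomp (inv2 a) a = id2 f;
  ax_inv_r : forall (X Y : obj B) (f g : hom X Y) (a : cell f g), vcomp a (inv2 a) = id2 g;
  ax_comp2_id : forall (X Y Z : obj B) (g : hom Y Z) (f : hom X Y),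
      comp2 (id2 g) (id2 f) = id2 (comp1 g f);
  ax_comp2_v : forall (X Y Z : obj B) (g g' g'' : hom Y Z) (f f' f'' : hom X Y)
      (b : cell g g') (b' : cell g' g'') (a : cell f f') (a' : cell f' f''),
      comp2 (vcomp b' b) (vcomp a' a) = vcomp (comp2 b' a') (comp2 b a);
  ax_rev2_id : forall (X Y : obj B) (f : hom X Y), rev2 (id2 f) = id2 (rev1 f);
  ax_rev2_v : forall (X Y : obj B) (f f' f'' : hom X Y) (a : cell f f') (a' : cell f' f''),
      rev2 (vcomp a' a) = vcomp (rev2 a') (rev2 a);
  ax_assoc_nat : forall (W X Y Z : obj B) (h h' : hom Y Z) (g g' : hom X Y) (f f' : hom W X)
      (c : cell h h') (b : cell g g') (a : cell f f'),
      vcomp (assoc h' g' f') (comp2 (comp2 c b) a) = vcomp (comp2 c (comp2 b a)) (assoc h g f);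
  ax_lu_nat : forall (X Y : obj B) (f f' : hom X Y) (a : cell f f'),
      vcomp a (lu f) = vcomp (lu f') (comp2 (id2 (id1 Y)) a);
  ax_ru_nat : forall (X Y : obj B) (f f' : hom X Y) (a : cell f f'),
      vcomp a (ru f) = vcomp (ru f') (comp2 a (id2 (id1 X)));
  ax_ev_nat : forall (X Y : obj B) (f f' : hom X Y) (a : cell f f'),
      vcomp (id2 (id1 X)) (ev f) = vcomp (ev f') (comp2 (rev2 a) a);
  ax_coev_nat : forall (X Y : obj B) (f f' : hom X Y) (a : cell f f'),
      vcomp (comp2 a (rev2 a)) (coev f) = vcomp (coev f') (id2 (id1 Y));
  ax_pentagon : forall (V W X Y Z : obj B) (k : hom Y Z) (h : hom X Y) (g : hom W X) (f : hom V W),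
      vcomp (assoc k h (comp1 g f)) (assoc (comp1 k h) g f)
      = vcomp (comp2 (id2 k) (assoc h g f))
              (vcomp (assoc k (comp1 h g) f) (comp2 (assoc k h g) (id2 f)));
  ax_triangle : forall (X Y Z : obj B) (g : hom Y Z) (f : hom X Y),
      vcomp (comp2 (id2 g) (lu f)) (assoc g (id1 Y) f) = comp2 (ru g) (id2 f);
  ax_inverse : forall (X Y : obj B) (f : hom X Y),
      vcomp (ru f) (vcomp (comp2 (id2 f) (ev f))
                          (vcomp (assoc f (rev1 f) f) (comp2 (coev f) (id2 f))))
      = lu f
}.

Record Bigroupoid := { bg_data :> BgData; bg_ax : BgAxioms bg_data }.

Record MorData (A B : BgData) := {
  m0 : obj A -> obj B;
  m1 : forall X Y : obj A, hom X Y -> hom (m0 X) (m0 Y);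
  m2 : forall (X Y : obj A) (f g : hom X Y), cell f g -> cell (m1 f) (m1 g);
  mphi : forall (X Y Z : obj A) (g : hom Y Z) (f : hom X Y),
           cell (comp1 (m1 g) (m1 f)) (m1 (comp1 g f));
  mphi0 : forall X : obj A, cell (id1 (m0 X)) (m1 (id1 X));
  mphiinv : forall (X Y : obj A) (f : hom X Y), cell (rev1 (m1 f)) (m1 (rev1 f))
}.

Arguments m0 {A B} _ _.
Arguments m1 {A B} _ {X Y} _.
Arguments m2 {A B} _ {X Y f g} _.
Arguments mphi {A B} _ {X Y Z} _ _.
Arguments mphi0 {A B} _ _.
Arguments mphiinv {A B} _ {X Y} _.

Definition is_morphism (A B : BgData) (F : MorData A B) : Prop :=
  (forall (X Y : obj A) (f : hom X Y), m2 F (id2 f) = id2 (m1 F f)) /\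
  (forall (X Y : obj A) (f g h : hom X Y) (a : cell f g) (b : cell g h),
      m2 F (vcomp b a) = vcomp (m2 F b) (m2 F a)) /\
  (forall (X Y Z : obj A) (g g' : hom Y Z) (f f' : hom X Y) (b : cell g g') (a : cell f f'),
      vcomp (m2 F (comp2 b a)) (mphi F g f) = vcomp (mphi F g' f') (comp2 (m2 F b) (m2 F a))) /\
  (forall (X Y : obj A) (f f' : hom X Y) (a : cell f f'),
      vcomp (m2 F (rev2 a)) (mphiinv F f) = vcomp (mphiinv F f') (rev2 (m2 F a))) /\
  (forall (W X Y Z : obj A) (h : hom Y Z) (g : hom X Y) (f : hom W X),
      vcomp (m2 F (assoc h g f)) (vcomp (mphi F (comp1 h g) f) (comp2 (mphi F h g) (id2 (m1 F f))))
      = vcomp (mphi F h (comp1 g f)) (vcomp (comp2 (id2 (m1 F h)) (mphi F g f))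
                                            (assoc (m1 F h) (m1 F g) (m1 F f)))) /\
  (forall (X Y : obj A) (f : hom X Y),
      vcomp (m2 F (ru f)) (vcomp (mphi F f (id1 X)) (comp2 (id2 (m1 F f)) (mphi0 F X)))
      = ru (m1 F f)) /\
  (forall (X Y : obj A) (f : hom X Y),
      vcomp (m2 F (lu f)) (vcomp (mphi F (id1 Y) f) (comp2 (mphi0 F Y) (id2 (m1 F f))))
      = lu (m1 F f)) /\
  (forall (X Y : obj A) (f : hom X Y),
      vcomp (m2 F (ev f)) (vcomp (mphi F (rev1 f) f) (comp2 (mphiinv F f) (id2 (m1 F f))))
      = vcomp (mphi0 F X) (ev (m1 F f))) /\
  (forall (X Y : obj A) (f : hom X Y),
      vcomp (m2 F (coev f)) (mphi0 F Y)
      = vcomp (mphi F f (rev1 f)) (vcomp (comp2 (id2 (m1 F f)) (mphiinv F f)) (coev (m1 F f)))).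

Definition mcomp (A B C : BgData) (G : MorData B C) (F : MorData A B) : MorData A C :=
  {| m0 := fun X => m0 G (m0 F X);
     m1 := fun X Y f => m1 G (m1 F f);
     m2 := fun X Y f g a => m2 G (m2 F a);
     mphi := fun X Y Z g f => vcomp (m2 G (mphi F g f)) (mphi G (m1 F g) (m1 F f));
     mphi0 := fun X => vcomp (m2 G (mphi0 F X)) (mphi0 G (m0 F X));
     mphiinv := fun X Y f => vcomp (m2 G (mphiinv F f)) (mphiinv G (m1 F f)) |}.

Definition is_fibration (A B : BgData) (F : MorData A B) : Prop :=
  (forall (A' : obj A) (Bo : obj B) (b : hom Bo (m0 F A')),
     exists (Ao : obj A) (a : hom Ao A'),
       existT (fun X : obj B => hom X (m0 F A')) (m0 F Ao) (m1 F a)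
       = existT (fun X : obj B => hom X (m0 F A')) Bo b) /\
  (forall (X Y : obj A) (a' : hom X Y) (b : hom (m0 F X) (m0 F Y)) (beta : cell b (m1 F a')),
     exists (a : hom X Y) (alpha : cell a a'),
       existT (fun x => cell x (m1 F a')) (m1 F a) (m2 F alpha)
       = existT (fun x => cell x (m1 F a')) b beta).

Definition is_cofibration (A B : BgData) (F : MorData A B) : Prop :=
  (forall X Y : obj A, m0 F X = m0 F Y -> X = Y) /\
  (forall (X Y : obj A) (f g : hom X Y), m1 F f = m1 F g -> f = g).

(* Equivalence of categories (groupoids) between A(X,Y) and B(FX,FY): a functor
   back together with natural isomorphisms (every 2-cell is invertible). *)
Definition is_equiv_hom (A B : BgData) (F : MorData A B) (X Y : obj A) : Prop :=
  exists (G1 : hom (m0 F X) (m0 F Y) -> hom X Y)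
         (G2 : forall b b' : hom (m0 F X) (m0 F Y), cell b b' -> cell (G1 b) (G1 b'))
         (eta : forall a : hom X Y, cell a (G1 (m1 F a)))
         (eps : forall b : hom (m0 F X) (m0 F Y), cell (m1 F (G1 b)) b),
    (forall b, G2 b b (id2 b) = id2 (G1 b)) /\
    (forall b b' b'' (u : cell b b') (v : cell b' b''),
        G2 b b'' (vcomp v u) = vcomp (G2 b' b'' v) (G2 b b' u)) /\
    (forall (a a' : hom X Y) (u : cell a a'),
        vcomp (eta a') u = vcomp (G2 _ _ (m2 F u)) (eta a)) /\
    (forall (b b' : hom (m0 F X) (m0 F Y)) (v : cell b b'),
        vcomp (eps b') (m2 F (G2 b b' v)) = vcomp v (eps b)).

Definition is_weak_equivalence (A B : BgData) (F : MorData A B) : Prop :=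
  (forall Bo : obj B, exists A' : obj A, inhabited (hom Bo (m0 F A'))) /\
  (forall X Y : obj A, is_equiv_hom F X Y).

Definition is_trivial_cofibration (A B : BgData) (F : MorData A B) : Prop :=
  is_cofibration F /\ is_weak_equivalence F.

Definition surjective_on_0cells (A B : BgData) (F : MorData A B) : Prop :=
  forall Bo : obj B, exists Ao : obj A, m0 F Ao = Bo.

(* Since K is bijective on 0-cells, D may be replaced by the bigroupoid with the 0-cells of A
   and the hom-groupoids of D; there K is the identity on 0-cells, and hom-wise quasi-inverses
   (unit eta, counit eps) assemble into a pseudo-inverse K^-1.  Let zeta_a : a => K^-1 K a be
   the unit corrected so that K zeta_a = eps^-1.  Then F K^-1 K agrees with F only up to the
   isomorphisms F zeta_a, and G F K^-1 = H K K^-1 agrees with H only up to H eps.  Both defects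
   are removed by changing the 1-cell part of F K^-1: a 1-cell K a (a is unique since K is
   injective on 1-cells) is sent to F a, any other 1-cell d to the source of a G-lift of the
   2-cell H(eps_d^-1) : H d => G F K^-1 d.  Conjugating F K^-1 by the chosen isomorphisms yields
   the required L. *)

From Stdlib Require Import FunctionalExtensionality Eqdep ClassicalEpsilon Classical.

Existing Class BgAxioms.

Section Groupoid.
Context {B : BgData} {HB : BgAxioms B}.

Lemma vcompA {X Y : obj B} {f g h k : hom X Y} (a : cell f g) (b : cell g h) (c : cell h k) :
  vcomp c (vcomp b a) = vcomp (vcomp c b) a.
Proof. exact (ax_vassoc HB a b c). Qed.
Lemma vcomp_idl {X Y : obj B} {f g : hom X Y} (a : cell f g) : vcomp (id2 g) a = a.
Proof. exact (ax_vid_l HB a). Qed.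
Lemma vcomp_idr {X Y : obj B} {f g : hom X Y} (a : cell f g) : vcomp a (id2 f) = a.
Proof. exact (ax_vid_r HB a). Qed.
Lemma vcomp_invl {X Y : obj B} {f g : hom X Y} (a : cell f g) : vcomp (inv2 a) a = id2 f.
Proof. exact (ax_inv_l HB a). Qed.
Lemma vcomp_invr {X Y : obj B} {f g : hom X Y} (a : cell f g) : vcomp a (inv2 a) = id2 g.
Proof. exact (ax_inv_r HB a). Qed.
Lemma comp2_id {X Y Z : obj B} (g : hom Y Z) (f : hom X Y) :
  comp2 (id2 g) (id2 f) = id2 (comp1 g f).
Proof. exact (ax_comp2_id HB g f). Qed.
Lemma comp2_vcomp {X Y Z : obj B} {g g' g'' : hom Y Z} {f f' f'' : hom X Y}
    (b : cell g g') (b' : cell g' g'') (a : cell f f') (a' : cell f' f'') :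
  comp2 (vcomp b' b) (vcomp a' a) = vcomp (comp2 b' a') (comp2 b a).
Proof. exact (ax_comp2_v HB b b' a a'). Qed.
Lemma rev2_id {X Y : obj B} (f : hom X Y) : rev2 (id2 f) = id2 (rev1 f).
Proof. exact (ax_rev2_id HB f). Qed.
Lemma rev2_vcomp {X Y : obj B} {f f' f'' : hom X Y} (a : cell f f') (a' : cell f' f'') :
  rev2 (vcomp a' a) = vcomp (rev2 a') (rev2 a).
Proof. exact (ax_rev2_v HB a a'). Qed.
Lemma assoc_nat {W X Y Z : obj B} {h h' : hom Y Z} {g g' : hom X Y} {f f' : hom W X}
    (c : cell h h') (b : cell g g') (a : cell f f') :
  vcomp (assoc h' g' f') (comp2 (comp2 c b) a) = vcomp (comp2 c (comp2 b a)) (assoc h g f).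
Proof. exact (ax_assoc_nat HB c b a). Qed.
Lemma lu_nat {X Y : obj B} {f f' : hom X Y} (a : cell f f') :
  vcomp a (lu f) = vcomp (lu f') (comp2 (id2 (id1 Y)) a).
Proof. exact (ax_lu_nat HB a). Qed.
Lemma ru_nat {X Y : obj B} {f f' : hom X Y} (a : cell f f') :
  vcomp a (ru f) = vcomp (ru f') (comp2 a (id2 (id1 X))).
Proof. exact (ax_ru_nat HB a). Qed.
Lemma ev_nat {X Y : obj B} {f f' : hom X Y} (a : cell f f') :
  ev f = vcomp (ev f') (comp2 (rev2 a) a).
Proof. rewrite <- (ax_ev_nat HB a), vcomp_idl. reflexivity. Qed.
Lemma coev_nat {X Y : obj B} {f f' : hom X Y} (a : cell f f') :
  vcomp (comp2 a (rev2 a)) (coev f) = coev f'.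
Proof. rewrite (ax_coev_nat HB a), vcomp_idr. reflexivity. Qed.

Lemma vcomp_cancell {X Y : obj B} {f g h : hom X Y} (a : cell f g) (x y : cell h f) :
  vcomp a x = vcomp a y -> x = y.
Proof.
  intro E. rewrite <- (vcomp_idl x), <- (vcomp_idl y), <- (vcomp_invl a), <- !vcompA, E.
  reflexivity.
Qed.
Lemma vcomp_cancelr {X Y : obj B} {f g h : hom X Y} (a : cell f g) (x y : cell g h) :
  vcomp x a = vcomp y a -> x = y.
Proof.
  intro E. rewrite <- (vcomp_idr x), <- (vcomp_idr y), <- (vcomp_invr a), !vcompA, E.
  reflexivity.
Qed.
Lemma inv2_unique {X Y : obj B} {f g : hom X Y} (a : cell f g) (b : cell g f) :
  vcomp b a = id2 f -> b = inv2 a.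
Proof. intro E. apply (vcomp_cancelr a). rewrite E, vcomp_invl. reflexivity. Qed.
Lemma inv2_id {X Y : obj B} (f : hom X Y) : inv2 (id2 f) = id2 f.
Proof. symmetry. apply inv2_unique, vcomp_idl. Qed.
Lemma inv2K {X Y : obj B} {f g : hom X Y} (a : cell f g) : inv2 (inv2 a) = a.
Proof. symmetry. apply inv2_unique, vcomp_invr. Qed.
Lemma vcompK {X Y : obj B} {f g h : hom X Y} (a : cell f g) (x : cell h f) :
  vcomp (inv2 a) (vcomp a x) = x.
Proof. rewrite vcompA, vcomp_invl, vcomp_idl. reflexivity. Qed.
Lemma vcompKV {X Y : obj B} {f g h : hom X Y} (a : cell g f) (x : cell h f) :
  vcomp a (vcomp (inv2 a) x) = x.
Proof. rewrite vcompA, vcomp_invr, vcomp_idl. reflexivity. Qed.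
Lemma inv2_vcomp {X Y : obj B} {f g h : hom X Y} (a : cell f g) (b : cell g h) :
  inv2 (vcomp b a) = vcomp (inv2 a) (inv2 b).
Proof. symmetry. apply inv2_unique. rewrite <- !vcompA, vcompK, vcomp_invl. reflexivity. Qed.
Lemma vcomp_moveL {X Y : obj B} {f g h : hom X Y} (a : cell f g) (x : cell h f) (y : cell h g) :
  x = vcomp (inv2 a) y -> vcomp a x = y.
Proof. intros ->. apply vcompKV. Qed.
Lemma comp2_inv2 {X Y Z : obj B} {g g' : hom Y Z} {f f' : hom X Y} (b : cell g g') (a : cell f f') :
  comp2 (inv2 b) (inv2 a) = inv2 (comp2 b a).
Proof. apply inv2_unique. rewrite <- comp2_vcomp, !vcomp_invl, comp2_id. reflexivity. Qed.
Lemma rev2_inv2 {X Y : obj B} {f f' : hom X Y} (a : cell f f') : rev2 (inv2 a) = inv2 (rev2 a).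
Proof. apply inv2_unique. rewrite <- rev2_vcomp, vcomp_invl, rev2_id. reflexivity. Qed.

Lemma comp2_vcompl {X Y Z : obj B} {g g' g'' : hom Y Z} {f f' : hom X Y}
    (b : cell g g') (b' : cell g' g'') (a : cell f f') :
  comp2 (vcomp b' b) a = vcomp (comp2 b' (id2 f')) (comp2 b a).
Proof. rewrite <- comp2_vcomp, vcomp_idl. reflexivity. Qed.
Lemma comp2_vcompr {X Y Z : obj B} {g g' : hom Y Z} {f f' f'' : hom X Y}
    (b : cell g g') (a : cell f f') (a' : cell f' f'') :
  comp2 b (vcomp a' a) = vcomp (comp2 (id2 g') a') (comp2 b a).
Proof. rewrite <- comp2_vcomp, vcomp_idl. reflexivity. Qed.
Lemma comp2_vcompl' {X Y Z : obj B} {g g' g'' : hom Y Z} {f f' : hom X Y}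
    (b : cell g g') (b' : cell g' g'') (a : cell f f') :
  comp2 (vcomp b' b) a = vcomp (comp2 b' a) (comp2 b (id2 f)).
Proof. rewrite <- comp2_vcomp, vcomp_idr. reflexivity. Qed.
Lemma comp2_vcompr' {X Y Z : obj B} {g g' : hom Y Z} {f f' f'' : hom X Y}
    (b : cell g g') (a : cell f f') (a' : cell f' f'') :
  comp2 b (vcomp a' a) = vcomp (comp2 b a') (comp2 (id2 g) a).
Proof. rewrite <- comp2_vcomp, vcomp_idr. reflexivity. Qed.
Lemma comp2_split {X Y Z : obj B} {g g' : hom Y Z} {f f' : hom X Y}
    (b : cell g g') (a : cell f f') :
  comp2 b a = vcomp (comp2 b (id2 f')) (comp2 (id2 g) a).
Proof. rewrite <- comp2_vcomp, vcomp_idl, vcomp_idr. reflexivity. Qed.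
Lemma comp2_split' {X Y Z : obj B} {g g' : hom Y Z} {f f' : hom X Y}
    (b : cell g g') (a : cell f f') :
  comp2 b a = vcomp (comp2 (id2 g') a) (comp2 b (id2 f)).
Proof. rewrite <- comp2_vcomp, vcomp_idl, vcomp_idr. reflexivity. Qed.
Lemma whiskerL_inv2 {X Y Z : obj B} (g : hom Y Z) {f f' : hom X Y} (a : cell f f') :
  inv2 (comp2 (id2 g) a) = comp2 (id2 g) (inv2 a).
Proof. rewrite <- comp2_inv2, inv2_id. reflexivity. Qed.
Lemma whiskerR_inv2 {X Y Z : obj B} {g g' : hom Y Z} (f : hom X Y) (b : cell g g') :
  inv2 (comp2 b (id2 f)) = comp2 (inv2 b) (id2 f).
Proof. rewrite <- comp2_inv2, inv2_id. reflexivity. Qed.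

Lemma vcomp_congr {X Y : obj B} {f g h : hom X Y} {l r : cell f g} (x : cell h f) :
  l = r -> vcomp l x = vcomp r x.
Proof. intros ->. reflexivity. Qed.
Lemma vcomp_congr_sym {X Y : obj B} {f g h : hom X Y} {l r : cell f g} (x : cell h f) :
  r = l -> vcomp l x = vcomp r x.
Proof. intros ->. reflexivity. Qed.
End Groupoid.

(* [vrewrite E] also rewrites when the left side of [E] is only a prefix of a right-nested
   vertical composite in the goal. *)
Ltac vnorm := repeat rewrite <- vcompA.
Ltac vnorm_in H := repeat rewrite <- vcompA in H.
Ltac vrewrite E :=
  first [ rewrite E
        | let H := fresh in epose proof (vcomp_congr _ E) as H; vnorm_in H; rewrite H; clear H ].
Ltac vrewrite_rev E :=
  first [ rewrite <- E
        | let H := fresh in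
          epose proof (vcomp_congr_sym _ E) as H; vnorm_in H; rewrite H; clear H ].

(* Cells whose boundaries are only propositionally equal are compared after packing them
   together with their boundary. *)
Definition packed_cell (B : BgData) := {XY : obj B * obj B &
   {fg : hom (fst XY) (snd XY) * hom (fst XY) (snd XY) & cell (fst fg) (snd fg)}}.
Definition pk {B : BgData} {X Y : obj B} {f g : hom X Y} (a : cell f g) : packed_cell B :=
  existT _ (X, Y) (existT (fun fg : hom X Y * hom X Y => cell (fst fg) (snd fg)) (f, g) a).
Definition packed_hom (B : BgData) := {XY : obj B * obj B & hom (fst XY) (snd XY)}.
Definition pk1 {B : BgData} {X Y : obj B} (f : hom X Y) : packed_hom B := existT _ (X, Y) f.
Definition pk_src {B : BgData} (p : packed_cell B) : packed_hom B :=
  existT _ (projT1 p) (fst (projT1 (projT2 p))).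

Ltac pk_inv H :=
  let H1 := fresh in
  pose proof (f_equal (@projT1 _ _) H) as H1; simpl in H1;
  try (injection H1; intros; subst); clear H1;
  apply inj_pair2 in H;
  try (pose proof (f_equal (@projT1 _ _) H) as H1; simpl in H1;
       try (injection H1; intros; subst); clear H1;
       apply inj_pair2 in H); subst.

Section Packing.
Context {B : BgData}.

Lemma pk_vcomp {X Y X' Y' : obj B} {f g h : hom X Y} {f' g' h' : hom X' Y'}
    (a : cell f g) (b : cell g h) (a' : cell f' g') (b' : cell g' h') :
  pk a = pk a' -> pk b = pk b' -> pk (vcomp b a) = pk (vcomp b' a').
Proof. intros E1 E2. pk_inv E1. pk_inv E2. reflexivity. Qed.
Lemma pk_comp2 {X Y Z X' Y' Z' : obj B} {g g' : hom Y Z} {f f' : hom X Y}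
    {h h' : hom Y' Z'} {k k' : hom X' Y'}
    (b : cell g g') (a : cell f f') (b' : cell h h') (a' : cell k k') :
  pk b = pk b' -> pk a = pk a' -> pk (comp2 b a) = pk (comp2 b' a').
Proof. intros E1 E2. pk_inv E1. pk_inv E2. reflexivity. Qed.
Lemma pk_inv2 {X Y X' Y' : obj B} {f g : hom X Y} {f' g' : hom X' Y'}
    (a : cell f g) (a' : cell f' g') :
  pk a = pk a' -> pk (inv2 a) = pk (inv2 a').
Proof. intros E1. pk_inv E1. reflexivity. Qed.
Lemma pk_rev2 {X Y X' Y' : obj B} {f g : hom X Y} {f' g' : hom X' Y'}
    (a : cell f g) (a' : cell f' g') :
  pk a = pk a' -> pk (rev2 a) = pk (rev2 a').
Proof. intros E1. pk_inv E1. reflexivity. Qed.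
Lemma pk_transport {X Y X' Y' : obj B} {f g : hom X Y} (a : cell f g) (g' : hom X' Y') :
  pk1 g = pk1 g' -> exists (f' : hom X' Y') (a' : cell f' g'), pk a' = pk a.
Proof. intros E. pk_inv E. exists f, a. reflexivity. Qed.
Lemma pk1_of_pk {X Y X' Y' : obj B} {f g : hom X Y} {f' g' : hom X' Y'}
    (a : cell f g) (a' : cell f' g') :
  pk a = pk a' -> pk1 f = pk1 f'.
Proof. intro E. exact (f_equal pk_src E). Qed.
Lemma pk_of_existT {X Y : obj B} {c x y : hom X Y} {p : cell x c} {q : cell y c} :
  existT (fun z => cell z c) x p = existT (fun z => cell z c) y q -> pk p = pk q.
Proof. intro E. exact (f_equal (fun s : {z : hom X Y & cell z c} => pk (projT2 s)) E). Qed.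
Lemma pk1_inj {X Y : obj B} (f g : hom X Y) : pk1 f = pk1 g -> f = g.
Proof. apply inj_pair2. Qed.
Lemma pk_inj {X Y : obj B} {f g : hom X Y} (a b : cell f g) : pk a = pk b -> a = b.
Proof. intro E. do 2 apply inj_pair2 in E. exact E. Qed.
End Packing.

Section Morphism.
Context {A B : BgData} {HA : BgAxioms A} {HB : BgAxioms B} {F : MorData A B} (HF : is_morphism F).

Lemma mor_id2 {X Y : obj A} (f : hom X Y) : m2 F (id2 f) = id2 (m1 F f).
Proof. apply HF. Qed.
Lemma mor_vcomp {X Y : obj A} {f g h : hom X Y} (a : cell f g) (b : cell g h) :
  m2 F (vcomp b a) = vcomp (m2 F b) (m2 F a).
Proof. apply HF. Qed.
Lemma mphi_nat {X Y Z : obj A} {g g' : hom Y Z} {f f' : hom X Y} (b : cell g g') (a : cell f f') :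
  vcomp (m2 F (comp2 b a)) (mphi F g f) = vcomp (mphi F g' f') (comp2 (m2 F b) (m2 F a)).
Proof. apply HF. Qed.
Lemma mphiinv_nat {X Y : obj A} {f f' : hom X Y} (a : cell f f') :
  vcomp (m2 F (rev2 a)) (mphiinv F f) = vcomp (mphiinv F f') (rev2 (m2 F a)).
Proof. apply HF. Qed.
Lemma mor_assoc {W X Y Z : obj A} (h : hom Y Z) (g : hom X Y) (f : hom W X) :
  vcomp (m2 F (assoc h g f)) (vcomp (mphi F (comp1 h g) f) (comp2 (mphi F h g) (id2 (m1 F f))))
  = vcomp (mphi F h (comp1 g f)) (vcomp (comp2 (id2 (m1 F h)) (mphi F g f))
                                        (assoc (m1 F h) (m1 F g) (m1 F f))).
Proof. apply HF. Qed.
Lemma mor_ru {X Y : obj A} (f : hom X Y) :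
  vcomp (m2 F (ru f)) (vcomp (mphi F f (id1 X)) (comp2 (id2 (m1 F f)) (mphi0 F X))) = ru (m1 F f).
Proof. apply HF. Qed.
Lemma mor_lu {X Y : obj A} (f : hom X Y) :
  vcomp (m2 F (lu f)) (vcomp (mphi F (id1 Y) f) (comp2 (mphi0 F Y) (id2 (m1 F f)))) = lu (m1 F f).
Proof. apply HF. Qed.
Lemma mor_ev {X Y : obj A} (f : hom X Y) :
  vcomp (m2 F (ev f)) (vcomp (mphi F (rev1 f) f) (comp2 (mphiinv F f) (id2 (m1 F f))))
  = vcomp (mphi0 F X) (ev (m1 F f)).
Proof. apply HF. Qed.
Lemma mor_coev {X Y : obj A} (f : hom X Y) :
  vcomp (m2 F (coev f)) (mphi0 F Y)
  = vcomp (mphi F f (rev1 f)) (vcomp (comp2 (id2 (m1 F f)) (mphiinv F f)) (coev (m1 F f))).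
Proof. apply HF. Qed.

Lemma mor_inv2 {X Y : obj A} {f g : hom X Y} (a : cell f g) : m2 F (inv2 a) = inv2 (m2 F a).
Proof. apply inv2_unique. rewrite <- mor_vcomp, vcomp_invl, mor_id2. reflexivity. Qed.
Lemma mphi_natl {X Y Z : obj A} {g g' : hom Y Z} (f : hom X Y) (b : cell g g') :
  vcomp (mphi F g' f) (comp2 (m2 F b) (id2 (m1 F f))) = vcomp (m2 F (comp2 b (id2 f))) (mphi F g f).
Proof. rewrite <- (mor_id2 f), mphi_nat. reflexivity. Qed.
Lemma mphi_natr {X Y Z : obj A} (g : hom Y Z) {f f' : hom X Y} (a : cell f f') :
  vcomp (mphi F g f') (comp2 (id2 (m1 F g)) (m2 F a)) = vcomp (m2 F (comp2 (id2 g) a)) (mphi F g f).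
Proof. rewrite <- (mor_id2 g), mphi_nat. reflexivity. Qed.

Lemma mor_assocV {W X Y Z : obj A} (h : hom Y Z) (g : hom X Y) (f : hom W X) :
  vcomp (assoc (m1 F h) (m1 F g) (m1 F f))
    (vcomp (comp2 (inv2 (mphi F h g)) (id2 (m1 F f))) (inv2 (mphi F (comp1 h g) f)))
  = vcomp (comp2 (id2 (m1 F h)) (inv2 (mphi F g f)))
      (vcomp (inv2 (mphi F h (comp1 g f))) (m2 F (assoc h g f))).
Proof.
  pose proof (f_equal inv2 (mor_assoc h g f)) as E.
  rewrite !inv2_vcomp, whiskerR_inv2, whiskerL_inv2 in E.
  apply (vcomp_cancelr (inv2 (m2 F (assoc h g f)))). vnorm. rewrite vcomp_invr, vcomp_idr.
  apply vcomp_moveL. vnorm_in E. rewrite <- E. reflexivity.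
Qed.
Lemma mor_ruV {X Y : obj A} (f : hom X Y) :
  m2 F (ru f) = vcomp (ru (m1 F f))
    (vcomp (comp2 (id2 (m1 F f)) (inv2 (mphi0 F X))) (inv2 (mphi F f (id1 X)))).
Proof.
  rewrite <- (mor_ru f). vnorm. rewrite <- whiskerL_inv2, vcompKV, vcomp_invr, vcomp_idr.
  reflexivity.
Qed.
Lemma mor_luV {X Y : obj A} (f : hom X Y) :
  m2 F (lu f) = vcomp (lu (m1 F f))
    (vcomp (comp2 (inv2 (mphi0 F Y)) (id2 (m1 F f))) (inv2 (mphi F (id1 Y) f))).
Proof.
  rewrite <- (mor_lu f). vnorm. rewrite <- whiskerR_inv2, vcompKV, vcomp_invr, vcomp_idr.
  reflexivity.
Qed.
Lemma mor_evV {X Y : obj A} (f : hom X Y) :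
  vcomp (inv2 (mphi0 F X)) (m2 F (ev f)) =
  vcomp (ev (m1 F f))
    (vcomp (comp2 (inv2 (mphiinv F f)) (id2 (m1 F f))) (inv2 (mphi F (rev1 f) f))).
Proof.
  apply (vcomp_cancelr (vcomp (mphi F (rev1 f) f) (comp2 (mphiinv F f) (id2 (m1 F f))))).
  rewrite <- vcompA, mor_ev, vcompK, <- whiskerR_inv2. vnorm. rewrite vcompK, vcomp_invl, vcomp_idr.
  reflexivity.
Qed.
Lemma mor_coevV {X Y : obj A} (f : hom X Y) :
  vcomp (comp2 (id2 (m1 F f)) (inv2 (mphiinv F f)))
    (vcomp (inv2 (mphi F f (rev1 f))) (m2 F (coev f)))
  = vcomp (coev (m1 F f)) (inv2 (mphi0 F Y)).
Proof.
  apply (vcomp_cancelr (mphi0 F Y)). vnorm. rewrite vcomp_invl, vcomp_idr, mor_coev.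
  rewrite vcompK, <- whiskerL_inv2, vcompK. reflexivity.
Qed.
Lemma mor_comp2 {X Y Z : obj A} {g g' : hom Y Z} {f f' : hom X Y} (b : cell g g') (a : cell f f') :
  m2 F (comp2 b a) = vcomp (mphi F g' f') (vcomp (comp2 (m2 F b) (m2 F a)) (inv2 (mphi F g f))).
Proof. rewrite vcompA, <- mphi_nat, <- vcompA, vcomp_invr, vcomp_idr. reflexivity. Qed.
Lemma mor_rev2 {X Y : obj A} {f f' : hom X Y} (a : cell f f') :
  m2 F (rev2 a) = vcomp (mphiinv F f') (vcomp (rev2 (m2 F a)) (inv2 (mphiinv F f))).
Proof. rewrite vcompA, <- mphiinv_nat, <- vcompA, vcomp_invr, vcomp_idr. reflexivity. Qed.
End Morphism.

Ltac mor_merge HF :=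
  first [ rewrite <- (mor_vcomp HF)
        | let H := fresh in epose proof (vcomp_congr_sym _ (mor_vcomp HF _ _)) as H;
          vnorm_in H; rewrite H; clear H ].

Lemma mcomp_morphism {A B C : BgData} `{BgAxioms A} `{BgAxioms B} `{BgAxioms C}
    (G : MorData B C) (F : MorData A B) (HF : is_morphism F) (HG : is_morphism G) :
  is_morphism (mcomp G F).
Proof.
  unfold is_morphism; simpl. repeat split; intros.
  - rewrite (mor_id2 HF), (mor_id2 HG). reflexivity.
  - rewrite (mor_vcomp HF), (mor_vcomp HG). reflexivity.
  - rewrite vcompA, <- (mor_vcomp HG), (mphi_nat HF), (mor_vcomp HG), <- vcompA, (mphi_nat HG),
      vcompA.
    reflexivity.
  - rewrite vcompA, <- (mor_vcomp HG), (mphiinv_nat HF), (mor_vcomp HG), <- vcompA,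
      (mphiinv_nat HG), vcompA.
    reflexivity.
  - rewrite comp2_vcompl. vnorm.
    vrewrite (mphi_natl HG (m1 F f) (mphi F h g)).
    do 2 mor_merge HG. rewrite <- !vcompA, (mor_assoc HF), !(mor_vcomp HG). vnorm.
    vrewrite (mor_assoc HG (m1 F h) (m1 F g) (m1 F f)).
    vrewrite_rev (mphi_natr HG (m1 F h) (mphi F g f)).
    rewrite comp2_vcompr. vnorm. reflexivity.
  - rewrite comp2_vcompr. vnorm.
    vrewrite (mphi_natr HG (m1 F f) (mphi0 F X)).
    do 2 mor_merge HG. rewrite <- !vcompA, (mor_ru HF). apply (mor_ru HG).
  - rewrite comp2_vcompl. vnorm.
    vrewrite (mphi_natl HG (m1 F f) (mphi0 F Y)).
    do 2 mor_merge HG. rewrite <- !vcompA, (mor_lu HF). apply (mor_lu HG).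
  - rewrite comp2_vcompl. vnorm.
    vrewrite (mphi_natl HG (m1 F f) (mphiinv F f)).
    do 2 mor_merge HG. rewrite <- !vcompA, (mor_ev HF), (mor_vcomp HG). vnorm.
    vrewrite (mor_ev HG (m1 F f)). vnorm. reflexivity.
  - rewrite comp2_vcompr. vnorm.
    mor_merge HG. rewrite (mor_coev HF), !(mor_vcomp HG). vnorm.
    vrewrite (mor_coev HG (m1 F f)). vnorm.
    vrewrite_rev (mphi_natr HG (m1 F f) (mphiinv F f)). reflexivity.
Qed.

Lemma morphism_ext {A B : BgData} (M N : MorData A B)
  (e0 : forall X, m0 M X = m0 N X)
  (e1 : forall X Y (f : hom X Y), pk1 (m1 M f) = pk1 (m1 N f))
  (e2 : forall X Y (f g : hom X Y) (a : cell f g), pk (m2 M a) = pk (m2 N a))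
  (e3 : forall X Y Z (g : hom Y Z) (f : hom X Y), pk (mphi M g f) = pk (mphi N g f))
  (e4 : forall X, pk (mphi0 M X) = pk (mphi0 N X))
  (e5 : forall X Y (f : hom X Y), pk (mphiinv M f) = pk (mphiinv N f)) : M = N.
Proof.
  destruct M as [f0 f1 f2 f3 f4 f5], N as [g0 g1 g2 g3 g4 g5]; simpl in *.
  assert (E0 : f0 = g0) by (apply functional_extensionality; auto). subst g0.
  assert (E1 : f1 = g1) by (repeat (apply functional_extensionality_dep; intro); apply pk1_inj, e1).
  subst g1.
  assert (E2 : f2 = g2) by (repeat (apply functional_extensionality_dep; intro); apply pk_inj, e2).
  assert (E3 : f3 = g3) by (repeat (apply functional_extensionality_dep; intro); apply pk_inj, e3).
  assert (E4 : f4 = g4) by (repeat (apply functional_extensionality_dep; intro); apply pk_inj, e4).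
  assert (E5 : f5 = g5) by (repeat (apply functional_extensionality_dep; intro); apply pk_inj, e5).
  subst. reflexivity.
Qed.

Lemma mcompA {A B C D : BgData} `{BgAxioms D} (F : MorData A B) (G : MorData B C) (M : MorData C D)
  (HM : is_morphism M) : mcomp (mcomp M G) F = mcomp M (mcomp G F).
Proof.
  apply morphism_ext; simpl; intros; try reflexivity.
  all: rewrite (mor_vcomp HM), vcompA; reflexivity.
Qed.

Section Conjugation.
Context {D B : BgData} {HB : BgAxioms B} {M : MorData D B} (HM : is_morphism M).
Variable L1 : forall X Y : obj D, hom X Y -> hom (m0 M X) (m0 M Y).
Variable th : forall (X Y : obj D) (d : hom X Y), cell (L1 X Y d) (m1 M d).
Arguments L1 {X Y} _.
Arguments th {X Y} d.

Definition mconj : MorData D B :=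
  {| m0 := m0 M;
     m1 := @L1;
     m2 := fun X Y f g a => vcomp (inv2 (th g)) (vcomp (m2 M a) (th f));
     mphi := fun X Y Z g f =>
       vcomp (inv2 (th (comp1 g f))) (vcomp (mphi M g f) (comp2 (th g) (th f)));
     mphi0 := fun X => vcomp (inv2 (th (id1 X))) (mphi0 M X);
     mphiinv := fun X Y f => vcomp (inv2 (th (rev1 f))) (vcomp (mphiinv M f) (rev2 (th f))) |}.

Lemma mconj_morphism : is_morphism mconj.
Proof.
  unfold is_morphism; simpl. repeat split; intros; vnorm.
  - rewrite (mor_id2 HM), vcomp_idl, vcomp_invl. reflexivity.
  - rewrite (mor_vcomp HM). vnorm. rewrite vcompKV. reflexivity.
  - rewrite <- comp2_vcomp, !vcompKV, comp2_vcomp. vnorm.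
    vrewrite (mphi_nat HM b a). reflexivity.
  - rewrite <- rev2_vcomp, !vcompKV, rev2_vcomp. vnorm.
    vrewrite (mphiinv_nat HM a). reflexivity.
  - rewrite vcompKV, <- (comp2_vcomp _ (th (comp1 h g))), vcompKV, vcomp_idr, comp2_vcompl. vnorm.
    vrewrite_rev open_constr:(comp2_vcomp (id2 (L1 h)) (th h) _ _).
    rewrite vcompKV, vcomp_idr, comp2_vcompr. vnorm.
    vrewrite_rev (assoc_nat (th h) (th g) (th f)). vrewrite (mor_assoc HM h g f). vnorm.
    reflexivity.
  - rewrite vcompKV.
    vrewrite_rev open_constr:(comp2_vcomp (id2 (L1 f)) (th f) _ _).
    rewrite vcompKV, vcomp_idr, comp2_split'.
    vrewrite (mor_ru HM f). vrewrite_rev (ru_nat (th f)). apply vcompK.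
  - rewrite vcompKV.
    vrewrite_rev open_constr:(comp2_vcomp _ (th (id1 Y)) (id2 (L1 f)) (th f)).
    rewrite vcompKV, vcomp_idr, comp2_split.
    vrewrite (mor_lu HM f). vrewrite_rev (lu_nat (th f)). apply vcompK.
  - rewrite vcompKV.
    vrewrite_rev open_constr:(comp2_vcomp _ (th (rev1 f)) (id2 (L1 f)) (th f)).
    rewrite vcompKV, vcomp_idr, comp2_vcompl. vnorm.
    vrewrite (mor_ev HM f). rewrite <- (ev_nat (th f)). reflexivity.
  - rewrite vcompKV, (mor_coev HM f).
    vrewrite_rev open_constr:(comp2_vcomp (id2 (L1 f)) (th f) _ _).
    rewrite vcompKV, vcomp_idr, comp2_vcompr. vnorm.
    rewrite (coev_nat (th f)). reflexivity.
Qed.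
End Conjugation.

Definition reindex (D : BgData) {T : Type} (k : T -> obj D) : BgData :=
  {| obj := T;
     hom := fun x y => hom (k x) (k y);
     cell := fun x y f g => @cell D (k x) (k y) f g;
     vcomp := fun x y f g h b a => vcomp b a;
     id2 := fun x y f => id2 f;
     inv2 := fun x y f g a => inv2 a;
     comp1 := fun x y z g f => comp1 g f;
     comp2 := fun x y z g g' f f' b a => comp2 b a;
     id1 := fun x => id1 (k x);
     rev1 := fun x y f => rev1 f;
     rev2 := fun x y f f' a => rev2 a;
     assoc := fun w x y z h g f => assoc h g f;
     lu := fun x y f => lu f;
     ru := fun x y f => ru f;
     ev := fun x y f => ev f;
     coev := fun x y f => coev f |}.

#[export] Instance reindex_axioms {D : BgData} `{BgAxioms D} {T : Type} (k : T -> obj D) :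
  BgAxioms (reindex D k).
Proof. destruct H; constructor; simpl; intros; auto. Qed.

Section ReindexedMorphism.
Context {D C : BgData} {T : Type} {k : T -> obj D} {M : MorData (reindex D k) C}
  (HM : is_morphism M).

Lemma rmor_id2 {x y : T} (f : hom (k x) (k y)) : m2 M (@id2 D _ _ f) = id2 (m1 M f).
Proof. exact (mor_id2 HM f). Qed.
Lemma rmor_vcomp {x y : T} {f g h : hom (k x) (k y)} (a : cell f g) (b : cell g h) :
  m2 M (@vcomp D _ _ _ _ _ b a) = vcomp (m2 M b) (m2 M a).
Proof. exact (mor_vcomp HM a b). Qed.
End ReindexedMorphism.

Definition retarget {A D : BgData} (K : MorData A D) : MorData A (reindex D (m0 K)) :=
  @Build_MorData A (reindex D (m0 K)) (fun x => x)
     (fun X Y f => m1 K f) (fun X Y f g a => m2 K a) (fun X Y Z g f => mphi K g f)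
     (fun X => mphi0 K X) (fun X Y f => mphiinv K f).

Record HomEquiv {A D : BgData} (K : MorData A D) (x y : obj A) : Type := {
  heq1 : hom (m0 K x) (m0 K y) -> hom x y;
  heq2 : forall b b' : hom (m0 K x) (m0 K y), cell b b' -> cell (heq1 b) (heq1 b');
  heq_unit : forall a : hom x y, cell a (heq1 (m1 K a));
  heq_counit : forall b : hom (m0 K x) (m0 K y), cell (m1 K (heq1 b)) b;
  heq2_id : forall b, heq2 b b (id2 b) = id2 (heq1 b);
  heq2_vcomp : forall b b' b'' (u : cell b b') (v : cell b' b''),
    heq2 b b'' (vcomp v u) = vcomp (heq2 b' b'' v) (heq2 b b' u);
  heq_unit_nat : forall (a a' : hom x y) (u : cell a a'),
    vcomp (heq_unit a') u = vcomp (heq2 _ _ (m2 K u)) (heq_unit a);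
  heq_counit_nat : forall (b b' : hom (m0 K x) (m0 K y)) (v : cell b b'),
    vcomp (heq_counit b') (m2 K (heq2 b b' v)) = vcomp v (heq_counit b) }.

Arguments heq1 {A D K x y} _ _.
Arguments heq2 {A D K x y} _ _ _ _.
Arguments heq_unit {A D K x y} _ _.
Arguments heq_counit {A D K x y} _ _.
Arguments heq2_id {A D K x y} _ _.
Arguments heq2_vcomp {A D K x y} _ _ _ _ _ _.
Arguments heq_unit_nat {A D K x y} _ _ _ _.
Arguments heq_counit_nat {A D K x y} _ _ _ _.

Lemma hom_equiv_of {A D : BgData} {K : MorData A D} {x y : obj A} :
  is_equiv_hom K x y -> HomEquiv K x y.
Proof.
  intro H.
  apply constructive_indefinite_description in H as [g1 H].
  apply constructive_indefinite_description in H as [g2 H].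
  apply constructive_indefinite_description in H as [u H].
  apply constructive_indefinite_description in H as [c [h1 [h2 [h3 h4]]]].
  exact (@Build_HomEquiv A D K x y g1 g2 u c h1 h2 h3 h4).
Defined.

Section PseudoInverse.
Context {A D : BgData} {HA : BgAxioms A} {HD : BgAxioms D} {K : MorData A D} (HK : is_morphism K).
Variable E : forall x y, HomEquiv K x y.

Definition kinv1 {x y : obj A} (d : hom (m0 K x) (m0 K y)) : hom x y := heq1 (E x y) d.
Definition kinv2 {x y : obj A} {d d' : hom (m0 K x) (m0 K y)} (u : cell d d') :
  cell (kinv1 d) (kinv1 d') := heq2 (E x y) d d' u.
Definition kunit {x y : obj A} (a : hom x y) : cell a (kinv1 (m1 K a)) := heq_unit (E x y) a.
Definition kcounit {x y : obj A} (d : hom (m0 K x) (m0 K y)) : cell (m1 K (kinv1 d)) d :=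
  heq_counit (E x y) d.
Definition kfull {x y : obj A} {a b : hom x y} (u : cell (m1 K a) (m1 K b)) : cell a b :=
  vcomp (inv2 (kunit b)) (vcomp (kinv2 u) (kunit a)).

Lemma kinv2_id {x y : obj A} (d : hom (m0 K x) (m0 K y)) : kinv2 (id2 d) = id2 (kinv1 d).
Proof. apply heq2_id. Qed.
Lemma kinv2_vcomp {x y : obj A} {d d' d'' : hom (m0 K x) (m0 K y)}
    (u : cell d d') (v : cell d' d'') :
  kinv2 (vcomp v u) = vcomp (kinv2 v) (kinv2 u).
Proof. apply heq2_vcomp. Qed.
Lemma kunit_nat {x y : obj A} {a a' : hom x y} (u : cell a a') :
  vcomp (kunit a') u = vcomp (kinv2 (m2 K u)) (kunit a).
Proof. apply heq_unit_nat. Qed.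
Lemma kcounit_nat {x y : obj A} {d d' : hom (m0 K x) (m0 K y)} (v : cell d d') :
  vcomp (kcounit d') (m2 K (kinv2 v)) = vcomp v (kcounit d).
Proof. apply heq_counit_nat. Qed.

Lemma K_faithful {x y : obj A} {a b : hom x y} (u v : cell a b) : m2 K u = m2 K v -> u = v.
Proof. intro H. apply (vcomp_cancell (kunit b)). rewrite !kunit_nat, H. reflexivity. Qed.
Lemma kinv2_faithful {x y : obj A} {d d' : hom (m0 K x) (m0 K y)} (u v : cell d d') :
  kinv2 u = kinv2 v -> u = v.
Proof. intro H. apply (vcomp_cancelr (kcounit d)). rewrite <- !kcounit_nat, H. reflexivity. Qed.
Lemma K_kfull {x y : obj A} {a b : hom x y} (u : cell (m1 K a) (m1 K b)) : m2 K (kfull u) = u.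
Proof.
  apply kinv2_faithful, (vcomp_cancelr (kunit a)).
  rewrite <- kunit_nat. unfold kfull. rewrite vcompKV. reflexivity.
Qed.
Lemma K_kinv2 {x y : obj A} {d d' : hom (m0 K x) (m0 K y)} (v : cell d d') :
  m2 K (kinv2 v) = vcomp (inv2 (kcounit d')) (vcomp v (kcounit d)).
Proof. rewrite <- kcounit_nat, vcompK. reflexivity. Qed.

Definition kinv_phi {x y z : obj A} (g : hom (m0 K y) (m0 K z)) (f : hom (m0 K x) (m0 K y)) :
    cell (comp1 (kinv1 g) (kinv1 f)) (kinv1 (comp1 g f)) :=
  kfull (vcomp (inv2 (kcounit (comp1 g f)))
          (vcomp (comp2 (kcounit g) (kcounit f)) (inv2 (mphi K (kinv1 g) (kinv1 f))))).
Definition kinv_phi0 (x : obj A) : cell (id1 x) (kinv1 (id1 (m0 K x))) :=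
  kfull (vcomp (inv2 (kcounit (id1 (m0 K x)))) (inv2 (mphi0 K x))).
Definition kinv_phiinv {x y : obj A} (f : hom (m0 K x) (m0 K y)) :
    cell (rev1 (kinv1 f)) (kinv1 (rev1 f)) :=
  kfull (vcomp (inv2 (kcounit (rev1 f))) (vcomp (rev2 (kcounit f)) (inv2 (mphiinv K (kinv1 f))))).

Definition kinv : MorData (reindex D (m0 K)) A :=
  @Build_MorData (reindex D (m0 K)) A (fun x => x)
    (fun x y d => kinv1 d) (fun x y d d' u => kinv2 u)
    (fun x y z g f => kinv_phi g f) kinv_phi0 (fun x y f => kinv_phiinv f).

Lemma kinv_morphism : is_morphism kinv.
Proof.
  unfold is_morphism; simpl. repeat split; intros; unfold kinv_phi, kinv_phi0, kinv_phiinv.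
  - apply kinv2_id.
  - apply kinv2_vcomp.
  - apply K_faithful. rewrite !(mor_vcomp HK), !K_kfull, (mor_comp2 HK), !K_kinv2.
    vnorm. rewrite vcompKV, vcompK.
    vrewrite_rev open_constr:(comp2_vcomp _ (kcounit g') _ (kcounit f')).
    rewrite !vcompKV, comp2_vcomp. vnorm. reflexivity.
  - apply K_faithful. rewrite !(mor_vcomp HK), !K_kfull, (mor_rev2 HK), !K_kinv2.
    vnorm. rewrite vcompKV, vcompK.
    vrewrite_rev open_constr:(rev2_vcomp _ (kcounit f')).
    rewrite !vcompKV, rev2_vcomp. vnorm. reflexivity.
  - apply K_faithful.
    rewrite !(mor_vcomp HK), !K_kfull, !(mor_comp2 HK), !K_kfull, !K_kinv2, !(mor_id2 HK).
    vnorm. rewrite vcompKV, !vcompK.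
    vrewrite_rev open_constr:(comp2_vcomp _ (kcounit (comp1 h g)) _ (kcounit f)).
    rewrite vcompKV, vcomp_idr, comp2_vcompl'. vnorm.
    vrewrite (assoc_nat (kcounit h) (kcounit g) (kcounit f)).
    vrewrite_rev open_constr:(comp2_vcomp _ (kcounit h) _ (kcounit (comp1 g f))).
    rewrite vcompKV, vcomp_idr, comp2_vcompr'. vnorm.
    rewrite (mor_assocV HK). reflexivity.
  - apply K_faithful.
    rewrite !(mor_vcomp HK), !K_kfull, !(mor_comp2 HK), !K_kfull, !(mor_id2 HK), K_kinv2.
    vnorm. rewrite vcompKV, !vcompK.
    vrewrite_rev open_constr:(comp2_vcomp _ (kcounit f) _ (kcounit (id1 (m0 K X)))).
    rewrite vcompKV, vcomp_idr, comp2_split. vnorm.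
    vrewrite_rev (ru_nat (kcounit f)). rewrite vcompK, (mor_ruV HK). reflexivity.
  - apply K_faithful.
    rewrite !(mor_vcomp HK), !K_kfull, !(mor_comp2 HK), !K_kfull, !(mor_id2 HK), K_kinv2.
    vnorm. rewrite vcompKV, !vcompK.
    vrewrite_rev open_constr:(comp2_vcomp _ (kcounit (id1 (m0 K Y))) _ (kcounit f)).
    rewrite vcompKV, vcomp_idr, comp2_split'. vnorm.
    vrewrite_rev (lu_nat (kcounit f)). rewrite vcompK, (mor_luV HK). reflexivity.
  - apply K_faithful.
    rewrite !(mor_vcomp HK), !K_kfull, !(mor_comp2 HK), !K_kfull, !(mor_id2 HK), K_kinv2.
    vnorm. rewrite vcompKV, !vcompK.
    vrewrite_rev open_constr:(comp2_vcomp _ (kcounit (rev1 f)) _ (kcounit f)).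
    rewrite vcompKV, vcomp_idr, comp2_vcompl'. vnorm.
    vrewrite_rev (ev_nat (kcounit f)). rewrite (mor_evV HK). reflexivity.
  - apply K_faithful.
    rewrite !(mor_vcomp HK), !K_kfull, !(mor_comp2 HK), !K_kfull, !(mor_id2 HK), K_kinv2.
    vnorm. rewrite vcompKV, !vcompK.
    vrewrite_rev open_constr:(comp2_vcomp _ (kcounit f) _ (kcounit (rev1 f))).
    rewrite vcompKV, vcomp_idr, comp2_vcompr'. vnorm.
    rewrite (mor_coevV HK), <- (coev_nat (kcounit f)). vnorm. reflexivity.
Qed.

Definition zeta {x y : obj A} (a : hom x y) : cell a (kinv1 (m1 K a)) :=
  kfull (inv2 (kcounit (m1 K a))).

Lemma zeta_nat {x y : obj A} {f g : hom x y} (u : cell f g) :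
  vcomp (zeta g) u = vcomp (kinv2 (m2 K u)) (zeta f).
Proof.
  apply K_faithful. unfold zeta. rewrite !(mor_vcomp HK), !K_kfull, K_kinv2. vnorm.
  rewrite vcomp_invr, vcomp_idr. reflexivity.
Qed.

Lemma zeta_mphi {x y z : obj A} (g : hom y z) (f : hom x y) :
  vcomp (kinv2 (mphi K g f)) (vcomp (kinv_phi (m1 K g) (m1 K f)) (comp2 (zeta g) (zeta f)))
  = zeta (comp1 g f).
Proof.
  apply K_faithful. unfold zeta, kinv_phi.
  rewrite !(mor_vcomp HK), (mor_comp2 HK), !K_kfull, K_kinv2. vnorm.
  rewrite vcompKV, vcompK, comp2_inv2, vcompKV, vcomp_invr, vcomp_idr. reflexivity.
Qed.

Lemma zeta_mphi0 (x : obj A) : vcomp (kinv2 (mphi0 K x)) (kinv_phi0 x) = zeta (id1 x).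
Proof.
  apply K_faithful. unfold zeta, kinv_phi0.
  rewrite (mor_vcomp HK), !K_kfull, K_kinv2. vnorm. rewrite vcompKV, vcomp_invr, vcomp_idr.
  reflexivity.
Qed.

Lemma zeta_mphiinv {x y : obj A} (f : hom x y) :
  vcomp (kinv2 (mphiinv K f)) (vcomp (kinv_phiinv (m1 K f)) (rev2 (zeta f))) = zeta (rev1 f).
Proof.
  apply K_faithful. unfold zeta, kinv_phiinv.
  rewrite !(mor_vcomp HK), (mor_rev2 HK), !K_kfull, K_kinv2. vnorm.
  rewrite vcompKV, vcompK, rev2_inv2, vcompKV, vcomp_invr, vcomp_idr. reflexivity.
Qed.
End PseudoInverse.

Section Lift.
Context {A B C D : BgData} {HA : BgAxioms A} {HB : BgAxioms B} {HC : BgAxioms C} {HD : BgAxioms D}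
  {F : MorData A B} {K : MorData A D} {G : MorData B C}
  (HF : is_morphism F) (HK : is_morphism K) (HG : is_morphism G).
Hypothesis K_cof : is_cofibration K.
Hypothesis G_fib : is_fibration G.
Variable E : forall x y : obj A, HomEquiv K x y.
Variable H : MorData (reindex D (m0 K)) C.
Hypothesis HH : is_morphism H.
Hypothesis Hcomm : mcomp G F = mcomp H (retarget K).

Lemma comm_m1 {x y : obj A} (a : hom x y) : pk1 (m1 G (m1 F a)) = pk1 (m1 H (m1 K a)).
Proof. exact (f_equal (fun M => pk1 (m1 M a)) Hcomm). Qed.
Lemma comm_m2 {x y : obj A} {a b : hom x y} (u : cell a b) :
  pk (m2 G (m2 F u)) = pk (m2 H (m2 K u)).
Proof. exact (f_equal (fun M => pk (m2 M u)) Hcomm). Qed.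

Lemma comm_mphi {x y z : obj A} (g : hom y z) (f : hom x y) :
  pk (vcomp (m2 G (mphi F g f)) (mphi G (m1 F g) (m1 F f)))
  = pk (vcomp (m2 H (mphi K g f)) (mphi H (m1 K g) (m1 K f))).
Proof. exact (f_equal (fun M => pk (mphi M g f)) Hcomm). Qed.
Lemma comm_mphi0 (x : obj A) :
  pk (vcomp (m2 G (mphi0 F x)) (mphi0 G (m0 F x))) = pk (vcomp (m2 H (mphi0 K x)) (mphi0 H x)).
Proof. exact (f_equal (fun M => pk (mphi0 M x)) Hcomm). Qed.
Lemma comm_mphiinv {x y : obj A} (f : hom x y) :
  pk (vcomp (m2 G (mphiinv F f)) (mphiinv G (m1 F f)))
  = pk (vcomp (m2 H (mphiinv K f)) (mphiinv H (m1 K f))).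
Proof. exact (f_equal (fun M => pk (mphiinv M f)) Hcomm). Qed.

Definition lift_fibre (x y : obj A) (d : hom (m0 K x) (m0 K y)) : Type :=
  {l : hom (m0 F x) (m0 F y) & cell l (m1 F (kinv1 E d))}.

Definition canonical_lift {x y : obj A} (a : hom x y) : lift_fibre x y (m1 K a) :=
  existT _ (m1 F a) (m2 F (zeta E a)).

Lemma lift_exists {x y : obj A} (d : hom (m0 K x) (m0 K y)) :
  exists p : lift_fibre x y d,
    pk (m2 G (projT2 p)) = pk (m2 H (inv2 (kcounit E d))) /\
    forall (a : hom x y) (e : m1 K a = d), p = eq_rect _ (lift_fibre x y) (canonical_lift a) d e.
Proof.
  destruct (classic (exists a, m1 K a = d)) as [[a <-] | Hd].
  - exists (canonical_lift a). split.
    + simpl. rewrite comm_m2. unfold zeta. rewrite K_kfull. reflexivity.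
    + intros a' e. pose proof (proj2 K_cof _ _ _ _ e) as <-. rewrite (UIP_refl _ _ e). reflexivity.
  - destruct (pk_transport (m2 H (inv2 (kcounit E d))) (m1 G (m1 F (kinv1 E d))))
      as [b [beta Hbeta]].
    { symmetry. apply comm_m1. }
    destruct (proj2 G_fib _ _ (m1 F (kinv1 E d)) b beta) as [a [alpha Halpha]].
    exists (existT _ a alpha). split.
    + exact (eq_trans (pk_of_existT Halpha) Hbeta).
    + intros a' e. exfalso. eauto.
Qed.

Definition lift {x y : obj A} (d : hom (m0 K x) (m0 K y)) : lift_fibre x y d :=
  proj1_sig (constructive_indefinite_description _ (lift_exists d)).

Lemma lift_over_H {x y : obj A} (d : hom (m0 K x) (m0 K y)) :
  pk (m2 G (projT2 (lift d))) = pk (m2 H (inv2 (kcounit E d))).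
Proof. exact (proj1 (proj2_sig (constructive_indefinite_description _ (lift_exists d)))). Qed.

Lemma lift_canonical {x y : obj A} (a : hom x y) : lift (m1 K a) = canonical_lift a.
Proof.
  exact (proj2 (proj2_sig (constructive_indefinite_description _ (lift_exists _))) a eq_refl).
Qed.

Definition Lmor : MorData (reindex D (m0 K)) B :=
  @mconj _ _ (mcomp F (kinv E)) (fun x y d => projT1 (lift d)) (fun x y d => projT2 (lift d)).

Lemma Lmor_morphism : is_morphism Lmor.
Proof. apply mconj_morphism, mcomp_morphism; [exact (kinv_morphism HK E) | exact HF]. Qed.

Lemma Lmor_retarget : mcomp Lmor (retarget K) = F.
Proof.
  apply morphism_ext; simpl; intros; try reflexivity.
  - rewrite lift_canonical. reflexivity.
  - rewrite !lift_canonical. simpl. apply f_equal.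
    rewrite <- (mor_inv2 HF), <- !(mor_vcomp HF), <- (zeta_nat HK E a), vcompK. reflexivity.
  - rewrite !lift_canonical. simpl. apply f_equal. vnorm. rewrite vcompKV.
    vrewrite_rev (mphi_nat HF (zeta E g) (zeta E f)).
    rewrite <- (mor_inv2 HF). do 3 mor_merge HF.
    vnorm. rewrite (zeta_mphi HK), vcomp_invl, (mor_id2 HF), vcomp_idl. reflexivity.
  - rewrite !lift_canonical. simpl. apply f_equal. vnorm. rewrite vcompKV.
    rewrite <- (mor_inv2 HF). do 2 mor_merge HF.
    vnorm. rewrite (zeta_mphi0 HK), vcomp_invl, (mor_id2 HF), vcomp_idl. reflexivity.
  - rewrite !lift_canonical. simpl. apply f_equal. vnorm. rewrite vcompKV.
    vrewrite_rev (mphiinv_nat HF (zeta E f)).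
    rewrite <- (mor_inv2 HF). do 3 mor_merge HF.
    vnorm. rewrite (zeta_mphiinv HK), vcomp_invl, (mor_id2 HF), vcomp_idl. reflexivity.
Qed.

Ltac pk_chain :=
  repeat first [ apply lift_over_H | apply comm_m2 | apply comm_mphi | apply comm_mphi0
               | apply comm_mphiinv
               | eapply pk_vcomp | eapply pk_inv2 | eapply pk_comp2 | eapply pk_rev2 ].

Lemma G_Lmor : mcomp G Lmor = H.
Proof.
  apply morphism_ext; simpl; intros.
  - exact (f_equal (fun M => m0 M X) Hcomm).
  - exact (pk1_of_pk _ _ (lift_over_H f)).
  - rewrite !(mor_vcomp HG), (mor_inv2 HG).
    eapply eq_trans; [pk_chain |]. apply f_equal.
    rewrite <- (mor_inv2 HH), <- !(mor_vcomp HH). apply f_equal. simpl.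
    rewrite K_kinv2, inv2K. vnorm. rewrite vcompKV, vcomp_invr, vcomp_idr. reflexivity.
  - rewrite !(mor_vcomp HG), (mor_inv2 HG). vnorm. rewrite (mphi_nat HG).
    rewrite (vcompA _ (mphi G _ _) (m2 G (mphi F _ _))).
    eapply eq_trans; [pk_chain |]. apply f_equal.
    rewrite <- (mor_inv2 HH). vnorm. do 2 mor_merge HH. simpl.
    unfold kinv_phi. rewrite K_kfull, inv2K. vnorm. rewrite vcompKV, vcomp_invl, vcomp_idr.
    vrewrite (mphi_nat HH (kcounit E g) (kcounit E f)).
    rewrite <- comp2_vcomp, <- !(rmor_vcomp HH), !vcomp_invr, !(rmor_id2 HH).
    rewrite comp2_id, vcomp_idr. reflexivity.
  - rewrite !(mor_vcomp HG), (mor_inv2 HG). vnorm.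
    eapply eq_trans; [pk_chain |]. apply f_equal.
    rewrite <- (mor_inv2 HH). vnorm. do 2 mor_merge HH. simpl.
    unfold kinv_phi0. rewrite K_kfull, inv2K. vnorm. rewrite vcompKV, vcomp_invl, (rmor_id2 HH).
    apply vcomp_idl.
  - rewrite !(mor_vcomp HG), (mor_inv2 HG). vnorm. rewrite (mphiinv_nat HG).
    rewrite (vcompA _ (mphiinv G _) (m2 G (mphiinv F _))).
    eapply eq_trans; [pk_chain |]. apply f_equal.
    rewrite <- (mor_inv2 HH). vnorm. do 2 mor_merge HH. simpl.
    unfold kinv_phiinv. rewrite K_kfull, inv2K. vnorm. rewrite vcompKV, vcomp_invl, vcomp_idr.
    vrewrite (mphiinv_nat HH (kcounit E f)).
    rewrite <- rev2_vcomp, <- (rmor_vcomp HH), vcomp_invr, (rmor_id2 HH), rev2_id, vcomp_idr.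
    reflexivity.
Qed.
End Lift.

Section Cast.
Context {D : BgData} {HD : BgAxioms D}.

Definition cast_hom {X Y X' Y' : obj D} (eX : X = X') (eY : Y = Y') (f : hom X Y) : hom X' Y'.
Proof. destruct eX, eY. exact f. Defined.
Definition cast_cell {X Y X' Y' : obj D} (eX : X = X') (eY : Y = Y') {f g : hom X Y}
    (u : cell f g) :
  cell (cast_hom eX eY f) (cast_hom eX eY g).
Proof. destruct eX, eY. exact u. Defined.
Definition cast_phi {X Y Z X' Y' Z' : obj D} (eX : X = X') (eY : Y = Y') (eZ : Z = Z')
    (g : hom Y Z) (f : hom X Y) :
  cell (comp1 (cast_hom eY eZ g) (cast_hom eX eY f)) (cast_hom eX eZ (comp1 g f)).
Proof. destruct eX, eY, eZ. exact (id2 _). Defined.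
Definition cast_phi0 {X X' : obj D} (eX : X = X') : cell (id1 X') (cast_hom eX eX (id1 X)).
Proof. destruct eX. exact (id2 _). Defined.
Definition cast_phiinv {X Y X' Y' : obj D} (eX : X = X') (eY : Y = Y') (f : hom X Y) :
  cell (rev1 (cast_hom eX eY f)) (cast_hom eY eX (rev1 f)).
Proof. destruct eX, eY. exact (id2 _). Defined.

Lemma cast_cell_id2 {X Y X' Y' : obj D} (eX : X = X') (eY : Y = Y') (f : hom X Y) :
  cast_cell eX eY (id2 f) = id2 _.
Proof. destruct eX, eY. reflexivity. Qed.
Lemma cast_cell_vcomp {X Y X' Y' : obj D} (eX : X = X') (eY : Y = Y') {f g h : hom X Y}
    (a : cell f g) (b : cell g h) :
  cast_cell eX eY (vcomp b a) = vcomp (cast_cell eX eY b) (cast_cell eX eY a).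
Proof. destruct eX, eY. reflexivity. Qed.
Lemma cast_phi_nat {X Y Z X' Y' Z' : obj D} (eX : X = X') (eY : Y = Y') (eZ : Z = Z')
    {g g' : hom Y Z} {f f' : hom X Y} (b : cell g g') (a : cell f f') :
  vcomp (cast_cell eX eZ (comp2 b a)) (cast_phi eX eY eZ g f)
  = vcomp (cast_phi eX eY eZ g' f') (comp2 (cast_cell eY eZ b) (cast_cell eX eY a)).
Proof. destruct eX, eY, eZ. simpl. rewrite vcomp_idr, vcomp_idl. reflexivity. Qed.
Lemma cast_phiinv_nat {X Y X' Y' : obj D} (eX : X = X') (eY : Y = Y') {f f' : hom X Y}
    (a : cell f f') :
  vcomp (cast_cell eY eX (rev2 a)) (cast_phiinv eX eY f)
  = vcomp (cast_phiinv eX eY f') (rev2 (cast_cell eX eY a)).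
Proof. destruct eX, eY. simpl. rewrite vcomp_idr, vcomp_idl. reflexivity. Qed.
Lemma cast_assoc {W X Y Z W' X' Y' Z' : obj D} (eW : W = W') (eX : X = X') (eY : Y = Y')
    (eZ : Z = Z') (h : hom Y Z) (g : hom X Y) (f : hom W X) :
  vcomp (cast_cell eW eZ (assoc h g f))
    (vcomp (cast_phi eW eX eZ (comp1 h g) f)
       (comp2 (cast_phi eX eY eZ h g) (id2 (cast_hom eW eX f))))
  = vcomp (cast_phi eW eY eZ h (comp1 g f))
      (vcomp (comp2 (id2 (cast_hom eY eZ h)) (cast_phi eW eX eY g f))
             (assoc (cast_hom eY eZ h) (cast_hom eX eY g) (cast_hom eW eX f))).
Proof. destruct eW, eX, eY, eZ. simpl. rewrite !comp2_id, !vcomp_idr, !vcomp_idl. reflexivity. Qed.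
Lemma cast_ru {X Y X' Y' : obj D} (eX : X = X') (eY : Y = Y') (f : hom X Y) :
  vcomp (cast_cell eX eY (ru f))
    (vcomp (cast_phi eX eX eY f (id1 X)) (comp2 (id2 (cast_hom eX eY f)) (cast_phi0 eX)))
  = ru (cast_hom eX eY f).
Proof. destruct eX, eY. simpl. rewrite !comp2_id, !vcomp_idr. reflexivity. Qed.
Lemma cast_lu {X Y X' Y' : obj D} (eX : X = X') (eY : Y = Y') (f : hom X Y) :
  vcomp (cast_cell eX eY (lu f))
    (vcomp (cast_phi eX eY eY (id1 Y) f) (comp2 (cast_phi0 eY) (id2 (cast_hom eX eY f))))
  = lu (cast_hom eX eY f).
Proof. destruct eX, eY. simpl. rewrite !comp2_id, !vcomp_idr. reflexivity. Qed.
Lemma cast_ev {X Y X' Y' : obj D} (eX : X = X') (eY : Y = Y') (f : hom X Y) :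
  vcomp (cast_cell eX eX (ev f))
    (vcomp (cast_phi eX eY eX (rev1 f) f) (comp2 (cast_phiinv eX eY f) (id2 (cast_hom eX eY f))))
  = vcomp (cast_phi0 eX) (ev (cast_hom eX eY f)).
Proof. destruct eX, eY. simpl. rewrite !comp2_id, !vcomp_idr, vcomp_idl. reflexivity. Qed.
Lemma cast_coev {X Y X' Y' : obj D} (eX : X = X') (eY : Y = Y') (f : hom X Y) :
  vcomp (cast_cell eY eY (coev f)) (cast_phi0 eY)
  = vcomp (cast_phi eY eX eY f (rev1 f))
      (vcomp (comp2 (id2 (cast_hom eX eY f)) (cast_phiinv eX eY f)) (coev (cast_hom eX eY f))).
Proof. destruct eX, eY. simpl. rewrite !comp2_id, !vcomp_idr, !vcomp_idl. reflexivity. Qed.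
End Cast.

Definition reindex_iso {D : BgData} {T : Type} (k : T -> obj D) (s : obj D -> T)
    (ks : forall X, X = k (s X)) : MorData D (reindex D k) :=
  @Build_MorData D (reindex D k) s
    (fun X Y d => cast_hom (ks X) (ks Y) d)
    (fun X Y f g u => cast_cell (ks X) (ks Y) u)
    (fun X Y Z g f => cast_phi (ks X) (ks Y) (ks Z) g f)
    (fun X => cast_phi0 (ks X))
    (fun X Y f => cast_phiinv (ks X) (ks Y) f).

Lemma reindex_iso_morphism {D : BgData} `{BgAxioms D} {T : Type} (k : T -> obj D) (s : obj D -> T)
    (ks : forall X, X = k (s X)) : is_morphism (reindex_iso k s ks).
Proof.
  unfold is_morphism; simpl; repeat split; intros.
  - apply cast_cell_id2.
  - apply cast_cell_vcomp.
  - apply cast_phi_nat.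
  - apply cast_phiinv_nat.
  - apply cast_assoc.
  - apply cast_ru.
  - apply cast_lu.
  - apply cast_ev.
  - apply cast_coev.
Qed.

Definition restrict {D C : BgData} {T : Type} (k : T -> obj D) (H : MorData D C) :
    MorData (reindex D k) C :=
  @Build_MorData (reindex D k) C (fun x => m0 H (k x))
    (fun x y d => m1 H d) (fun x y f g u => m2 H u) (fun x y z g f => mphi H g f)
    (fun x => mphi0 H (k x)) (fun x y f => mphiinv H f).

Lemma restrict_morphism {D C : BgData} {T : Type} (k : T -> obj D) {H : MorData D C} :
  is_morphism H -> is_morphism (restrict k H).
Proof.
  intros [h1 [h2 [h3 [h4 [h5 [h6 [h7 [h8 h9]]]]]]]].
  repeat split; intros; simpl; auto.
Qed.

Lemma reindex_iso_retarget {A D : BgData} `{BgAxioms D} (K : MorData A D) (s : obj D -> obj A)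
    (ks : forall X, X = m0 K (s X)) (sk : forall x, s (m0 K x) = x) :
  mcomp (reindex_iso (m0 K) s ks) K = retarget K.
Proof.
  apply morphism_ext; simpl; [apply sk | ..]; intros;
    repeat match goal with
    | |- context [ks (m0 K ?x)] =>
        generalize (ks (m0 K x)); rewrite (sk x); intro e; rewrite (UIP_refl _ _ e); clear e
    end; simpl; rewrite ?vcomp_idr; reflexivity.
Qed.

Section CastRestrict.
Context {D C : BgData} {HC : BgAxioms C} {H : MorData D C} (HH : is_morphism H).

Lemma pk1_H_cast {X Y X' Y' : obj D} (eX : X = X') (eY : Y = Y') (d : hom X Y) :
  pk1 (m1 H (cast_hom eX eY d)) = pk1 (m1 H d).
Proof. destruct eX, eY. reflexivity. Qed.
Lemma pk_H_cast {X Y X' Y' : obj D} (eX : X = X') (eY : Y = Y') {f g : hom X Y} (u : cell f g) :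
  pk (m2 H (cast_cell eX eY u)) = pk (m2 H u).
Proof. destruct eX, eY. reflexivity. Qed.
Lemma pk_H_cast_phi {X Y Z X' Y' Z' : obj D} (eX : X = X') (eY : Y = Y') (eZ : Z = Z')
    (g : hom Y Z) (f : hom X Y) :
  pk (vcomp (m2 H (cast_phi eX eY eZ g f)) (mphi H (cast_hom eY eZ g) (cast_hom eX eY f)))
  = pk (mphi H g f).
Proof. destruct eX, eY, eZ. simpl. rewrite (mor_id2 HH), vcomp_idl. reflexivity. Qed.
Lemma pk_H_cast_phi0 {X X' : obj D} (eX : X = X') :
  pk (vcomp (m2 H (cast_phi0 eX)) (mphi0 H X')) = pk (mphi0 H X).
Proof. destruct eX. simpl. rewrite (mor_id2 HH), vcomp_idl. reflexivity. Qed.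
Lemma pk_H_cast_phiinv {X Y X' Y' : obj D} (eX : X = X') (eY : Y = Y') (f : hom X Y) :
  pk (vcomp (m2 H (cast_phiinv eX eY f)) (mphiinv H (cast_hom eX eY f))) = pk (mphiinv H f).
Proof. destruct eX, eY. simpl. rewrite (mor_id2 HH), vcomp_idl. reflexivity. Qed.

Lemma restrict_reindex_iso {T : Type} (k : T -> obj D) (s : obj D -> T)
    (ks : forall X, X = k (s X)) :
  mcomp (restrict k H) (reindex_iso k s ks) = H.
Proof.
  apply morphism_ext; simpl; intros.
  - symmetry. apply f_equal, ks.
  - apply pk1_H_cast.
  - apply pk_H_cast.
  - apply pk_H_cast_phi.
  - apply pk_H_cast_phi0.
  - apply pk_H_cast_phiinv.
Qed.
End CastRestrict.

Theorem lemma5p5 (A B C D : Bigroupoid)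
  (F : MorData A B) (K : MorData A D) (G : MorData B C) (H : MorData D C)
  (HF : is_morphism F) (HK : is_morphism K) (HG : is_morphism G) (HH : is_morphism H)
  (Hcomm : mcomp G F = mcomp H K)
  (Ktc : is_trivial_cofibration K) (Ksurj : surjective_on_0cells K)
  (Gfib : is_fibration G) :
  exists L : MorData D B,
    is_morphism L /\ mcomp L K = F /\ mcomp G L = H.
Proof.
  destruct A as [A HA], B as [B HB], C as [C HC], D as [D HD]. simpl in *.
  destruct Ktc as [Kcof [_ K_equiv]].
  set (s := fun X => proj1_sig (constructive_indefinite_description _ (Ksurj X))).
  assert (ks : forall X, X = m0 K (s X)).
  { intro X. symmetry. exact (proj2_sig (constructive_indefinite_description _ (Ksurj X))). }
  assert (sk : forall x, s (m0 K x) = x) by (intro x; apply (proj1 Kcof); symmetry; apply ks).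
  set (E := fun x y => hom_equiv_of (K_equiv x y)).
  set (L := Lmor Kcof Gfib E (restrict (m0 K) H) Hcomm).
  assert (HL : is_morphism L) by exact (Lmor_morphism HF HK _ _ _ _ _).
  exists (mcomp L (reindex_iso (m0 K) s ks)). split; [|split].
  - exact (mcomp_morphism _ _ (reindex_iso_morphism _ _ _) HL).
  - rewrite (mcompA _ _ _ HL), (reindex_iso_retarget K s ks sk).
    exact (Lmor_retarget HF HK _ _ _ _ _).
  - unfold L. rewrite <- (mcompA _ _ _ HG), (G_Lmor HG _ _ _ _ (restrict_morphism _ HH)).
    exact (restrict_reindex_iso HH _ _ ks).
Qed.
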